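(* Let $A$ and $B$ be non-coprime nonzero integers, let $g=\gcd(A,B)$, and write $A=ga$, $B=gb$ (so $\gcd(a,b)=1$). Let $L$ be a positive integer, let $\ell=\prod_{p\nmid g}p^{\nu_p(L)}$ and $\gamma(L)=\max_{p\mid g}\left\lceil \nu_p(L)/\nu_p(g)\right\rceil$. Then the following are equivalent: (i) there exists a positive integer $K$ with $L\mid(A^K+B^K)$; (ii) there exists a positive integer $\kappa\ge\gamma(L)$ with $\ell\mid(a^{\kappa}+b^{\kappa})$; (iii) there exists a positive integer $k$ with $\ell\mid(a^k+b^k)$.
   Context: $\nu_p(n)$ denotes the $p$-adic valuation of a nonzero integer $n$; products and maxima indexed by $p$ range over primes. $\lceil x\rceil$ is the least integer $\ge x$. *)

From mathcomp Require Import all_boot all_order all_algebra.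
Set Implicit Arguments. Unset Strict Implicit. Unset Printing Implicit Defensive.
Import Order.TTheory GRing.Theory Num.Theory.

Definition gcd_nat (A B : int) : nat := gcdn `|A|%N `|B|%N.

Definition ceildiv (m n : nat) : nat := (m + n.-1) %/ n.

(* ell = prod_{p prime, p not dividing g} p^{nu_p(L)}; primes p > L contribute p^0 = 1 *)
Definition ell (L g : nat) : nat :=
  \prod_(p < L.+1 | prime p && ~~ (p %| g)) p ^ logn p L.

(* gamma(L) = max_{p prime, p | g} ceil(nu_p(L)/nu_p(g)); primes dividing g are <= g *)
Definition gamma (L g : nat) : nat :=
  \max_(p < g.+1 | prime p && (p %| g)) ceildiv (logn p L) (logn p g).

From mathcomp Require Import all_boot all_order all_algebra.
From mathcomp Require Import zify.
Import Order.TTheory GRing.Theory Num.Theory.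

(* Write A^K + B^K = (a^K + b^K) g^K.  As ell is the part of L coprime to g,
   L | A^K + B^K forces ell | a^K + b^K.  Conversely, for every prime p | g the
   factor g^K carries p^(nu_p L) as soon as K >= gamma(L), so then
   ell | a^K + b^K gives L | A^K + B^K.  Finally an exponent k with
   ell | a^k + b^k can be raised to k (2 gamma + 1) >= gamma, since x + y divides
   x^m + y^m for odd m. *)

Lemma ell_partn (L g : nat) : ell L g = L`_[pred p | ~~ (p %| g)].
Proof.
rewrite /ell /partn big_mkord [RHS]big_mkcond [LHS]big_mkcond /=.
apply: eq_bigr => p _; rewrite !inE.
case pr_p: (prime p) => //=.
by case: ifP => // _; rewrite lognE pr_p.
Qed.

Lemma dvdn_ell (L g : nat) : (ell L g %| L)%N.
Proof. by rewrite ell_partn dvdn_part. Qed.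

Lemma coprime_ell (L g : nat) : (0 < g)%N -> coprime (ell L g) g.
Proof.
move=> g_gt0; rewrite ell_partn.
have := coprime_partC [pred p | ~~ (p %| g)] L g.
rewrite (@part_pnat_id _ g) //; apply/(pnatP _ g_gt0) => p _ p_dvd_g.
by rewrite !inE p_dvd_g.
Qed.

Lemma leq_ceildiv_mul (m e : nat) : (0 < e)%N -> (m <= ceildiv m e * e)%N.
Proof.
move=> e_gt0; rewrite /ceildiv.
have := ltn_ceil (m + e.-1) e_gt0; rewrite mulSn.
move: ((m + e.-1) %/ e * e)%N => X; lia.
Qed.

Lemma ceildiv_logn_le_gamma (L g p : nat) : (0 < g)%N -> prime p -> (p %| g)%N ->
  (ceildiv (logn p L) (logn p g) <= gamma L g)%N.
Proof.
move=> g_gt0 pr_p p_dvd_g.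
have p_lt : (p < g.+1)%N by rewrite ltnS dvdn_leq.
have := @leq_bigmax_cond _ (fun q : 'I_g.+1 => prime q && (q %| g))
  (fun q : 'I_g.+1 => ceildiv (logn q L) (logn q g)) (Ordinal p_lt).
by rewrite /= pr_p p_dvd_g; apply.
Qed.

Lemma dvdn_exp_gamma_ell (L g k : nat) : (0 < L)%N -> (0 < g)%N ->
  (gamma L g <= k)%N -> (L %| g ^ k * ell L g)%N.
Proof.
move=> L_gt0 g_gt0 gamma_le_k; apply/dvdn_partP => // p.
rewrite mem_primes => /and3P[pr_p _ _]; rewrite p_part.
case p_dvd_g: (p %| g).
  apply: dvdn_mulr; rewrite pfactor_dvdn ?expn_gt0 ?g_gt0 // lognX.
  have logn_pg_gt0 : (0 < logn p g)%N by rewrite logn_gt0 mem_primes pr_p g_gt0.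
  apply: leq_trans (leq_ceildiv_mul _ _ logn_pg_gt0) _; rewrite leq_mul2r.
  by rewrite (leq_trans (ceildiv_logn_le_gamma L _ _ g_gt0 pr_p p_dvd_g)) ?orbT.
apply/dvdn_mull/(dvdn_trans _ (dvdn_part p (ell L g))).
rewrite ell_partn partn_part ?p_part // => q.
by rewrite !inE => /eqP ->; rewrite p_dvd_g.
Qed.

Local Open Scope ring_scope.

Lemma dvdz_addXX_odd (x y : int) (m : nat) : odd m -> (x + y %| x ^+ m + y ^+ m)%Z.
Proof.
move=> odd_m; have := subrXX x (- y) m.
rewrite opprK exprNn -signr_odd odd_m expr1 mulN1r opprK => ->.
exact: dvdz_mulr.
Qed.

Lemma dvdz_addXX_mul_odd (d x y : int) (k m : nat) : odd m ->
  (d %| x ^+ k + y ^+ k)%Z -> (d %| x ^+ (k * m) + y ^+ (k * m))%Z.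
Proof.
move=> odd_m /dvdz_trans; apply.
by rewrite !exprM; apply: dvdz_addXX_odd.
Qed.

Section ScaledSumOfPowers.

Variables (L g : nat) (a b : int).

Lemma ell_dvdz_addXX (K : nat) : (0 < g)%N ->
  (L%:Z %| (a ^+ K + b ^+ K) * g%:Z ^+ K)%Z -> ((ell L g)%:Z %| a ^+ K + b ^+ K)%Z.
Proof.
move=> g_gt0; rewrite !dvdzE abszM abszX !absz_nat => L_dvd.
rewrite -(Gauss_dvdl _ (coprimeXr K (coprime_ell L _ g_gt0))).
exact: dvdn_trans (dvdn_ell L g) L_dvd.
Qed.

Lemma dvdz_scaled_addXX (k : nat) : (0 < L)%N -> (0 < g)%N -> (gamma L g <= k)%N ->
  ((ell L g)%:Z %| a ^+ k + b ^+ k)%Z -> (L%:Z %| (a ^+ k + b ^+ k) * g%:Z ^+ k)%Z.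
Proof.
move=> L_gt0 g_gt0 gamma_le_k; rewrite !dvdzE abszM abszX !absz_nat => ell_dvd.
apply: dvdn_trans (dvdn_exp_gamma_ell _ _ _ L_gt0 g_gt0 gamma_le_k) _.
by rewrite mulnC dvdn_mul.
Qed.

Lemma ell_dvdz_addXX_large_exponent :
  (exists k : nat, (0 < k)%N /\ ((ell L g)%:Z %| a ^+ k + b ^+ k)%Z) ->
  exists kappa : nat, (0 < kappa)%N /\ (gamma L g <= kappa)%N /\
    ((ell L g)%:Z %| a ^+ kappa + b ^+ kappa)%Z.
Proof.
move=> [k [k_gt0 ell_dvd]]; exists (k * (gamma L g).*2.+1)%N.
split; first by rewrite muln_gt0 k_gt0.
split; first by apply: leq_trans (leq_pmull _ k_gt0); rewrite -addnn; lia.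
by apply: dvdz_addXX_mul_odd ell_dvd; rewrite /= odd_double.
Qed.

End ScaledSumOfPowers.

Theorem lemma3p3 (A B : int) (L : nat) :
  A != 0 -> B != 0 -> ~~ coprimez A B -> (0 < L)%N ->
  let g : nat := gcd_nat A B in
  let a : int := (A %/ g%:Z)%Z in
  let b : int := (B %/ g%:Z)%Z in
  ((exists K : nat, (0 < K)%N /\ (L%:Z %| A ^+ K + B ^+ K)%Z) <->
   (exists kappa : nat, (0 < kappa)%N /\ (gamma L g <= kappa)%N /\
      ((ell L g)%:Z %| a ^+ kappa + b ^+ kappa)%Z)) /\
  ((exists kappa : nat, (0 < kappa)%N /\ (gamma L g <= kappa)%N /\
      ((ell L g)%:Z %| a ^+ kappa + b ^+ kappa)%Z) <->
   (exists k : nat, (0 < k)%N /\ ((ell L g)%:Z %| a ^+ k + b ^+ k)%Z)).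
Proof.
move=> A_neq0 _ _ L_gt0 g a b.
have g_gt0 : (0 < g)%N by rewrite gcdn_gt0 absz_gt0 A_neq0.
have A_eq : A = a * g%:Z by rewrite divzK // dvdzE absz_nat dvdn_gcdl.
have B_eq : B = b * g%:Z by rewrite divzK // dvdzE absz_nat dvdn_gcdr.
have addXX_eq K : A ^+ K + B ^+ K = (a ^+ K + b ^+ K) * g%:Z ^+ K.
  by rewrite A_eq B_eq !exprMn mulrDl.
split; last first.
  split; last exact: ell_dvdz_addXX_large_exponent.
  by move=> [k [k_gt0 [_ ell_dvd]]]; exists k.
split.
  move=> [K [K_gt0 L_dvd]]; apply: ell_dvdz_addXX_large_exponent.
  by exists K; split => //; apply: ell_dvdz_addXX g_gt0 _; rewrite -addXX_eq.
move=> [k [k_gt0 [gamma_le_k ell_dvd]]]; exists k; split => //.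
by rewrite addXX_eq; apply: dvdz_scaled_addXX.
Qed.
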